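(* Let $\mathcal{A}$ be a cubical $k$-way tensor of dimension $n$ that is general symmetric with respect to a permutation matrix $P$, i.e. $P\,\mathrm{vec}(\mathcal{A})=\mathrm{vec}(\mathcal{A})$ where $P$ corresponds with a general symmetry. Fix a degree $d$ and cubical factor dimensions: $n^{(i)}_1=\cdots=n^{(i)}_k=m_i$ with $\prod_{i=1}^d m_i=n$, and let $P_1,\dots,P_d$ be permutation matrices with $P=Q^T(P_d\otimes\cdots\otimes P_1)Q$. Suppose $\tilde{\mathcal{A}}=\sum_{j=1}^R\sigma_j\,a^{(1)}_j\circ\cdots\circ a^{(d)}_j$ is a polyadic decomposition with $\|a^{(i)}_j\|_2=1$ for all $i,j$ and with mutually orthogonal rank-1 terms, and let $\mathcal{A}^{(i)}_j$ be the $m_i\times\cdots\times m_i$ ($k$-way) tensor with $\mathrm{vec}(\mathcal{A}^{(i)}_j)=a^{(i)}_j$, so that $\mathcal{A}=\sum_{j=1}^R\sigma_j\,\mathcal{A}^{(d)}_j\otimes\cdots\otimes\mathcal{A}^{(1)}_j$. Assume Condition 1: the $\sigma_j$ are pairwise distinct and, for every $l\in\{1,\dots,R\}$ and every $j\neq l$, $\sigma_j\prod_{i=1}^d (a^{(i)}_l)^TP_i\,a^{(i)}_j=0$. Then each factor $\mathcal{A}^{(i)}_j$ is either general symmetric or general skew-symmetric, i.e. $P_i\,\mathrm{vec}(\mathcal{A}^{(i)}_j)=\pm\mathrm{vec}(\mathcal{A}^{(i)}_j)$, and in each term $j$ the number of indices $i$ for which $\mathcal{A}^{(i)}_j$ is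 general skew-symmetric is either zero or even.
   Context: Grouped index convention: $[j_1\cdots j_m]$ denotes the linear index with the first index varying fastest, and $\mathrm{vec}(\mathcal{B})_{[j_1\cdots j_k]}=\mathcal{B}_{j_1\cdots j_k}$. The outer product $a^{(1)}\circ\cdots\circ a^{(d)}$ has entries $a^{(1)}_{l_1}\cdots a^{(d)}_{l_d}$; two tensors are orthogonal if the sum of entrywise products is zero. Tensor Kronecker product of $k$-way tensors: $(\mathcal{B}\otimes\mathcal{C})_{[i_1i_{k+1}]\cdots[i_ki_{2k}]}=\mathcal{B}_{i_{k+1}\cdots i_{2k}}\mathcal{C}_{i_1\cdots i_k}$. Given degree $d$ and dimensions $n^{(i)}_r$ with $\prod_i n^{(i)}_r=n$, the permuted tensor $\tilde{\mathcal{A}}$ has entries $\tilde{\mathcal{A}}_{[i^{(1)}_1\cdots i^{(1)}_k]\cdots[i^{(d)}_1\cdots i^{(d)}_k]}=\mathcal{A}_{[i^{(1)}_1\cdots i^{(d)}_1]\cdots[i^{(1)}_k\cdots i^{(d)}_k]}$, and $Q$ is the permutation matrix with $Q\,\mathrm{vec}(\mathcal{A})=\mathrm{vec}(\tilde{\mathcal{A}})$. A permutation matrix $P$ of size $n^k$ corresponds with a general symmetry if for every degree $d$ and every such choice of dimensions there are permutation matrices $P_1,\dots,P_d$, $P_i$ of size $\prod_r n^{(i)}_r$, with $P=Q^T(P_d\otimes\cdots\otimes P_1)Q$ (matrix Kronecker product). A factor $\mathcal{A}^{(i)}_j$ is called general symmetric (resp. general skew-symmetric) here if $P_i\,\mathrm{vec}(\mathcal{A}^{(i)}_j)=\mathrm{vec}(\mathcal{A}^{(i)}_j)$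 (resp. $=-\mathrm{vec}(\mathcal{A}^{(i)}_j)$). *)

From mathcomp Require Import all_boot all_order all_algebra all_fingroup.
Set Implicit Arguments. Unset Strict Implicit. Unset Printing Implicit Defensive.
Import Order.TTheory GRing.Theory Num.Theory.
Local Open Scope ring_scope.

(* Conventions: all indices are 0-based.  A k-way tensor with mode sizes
   N_1..N_k is represented by its vectorization vec(B) : 'cV_(N_1*...*N_k),
   using the grouped (mixed-radix, first index fastest) linear index
   [j_1 ... j_k] = j_1 + N_1 * (j_2 + N_2 * ( ... )). *)

Definition radix (dims : nat -> nat) (r : nat) : nat := (\prod_(s < r) dims s)%N.

Definition digit (dims : nat -> nat) (r x : nat) : nat :=
  ((x %/ radix dims r) %% dims r)%N.

(* entry of a matrix addressed by natural numbers (0 if out of range) *)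
Definition ment {R : nzRingType} {m n : nat} (A : 'M[R]_(m, n)) (x y : nat) : R :=
  match (insub x : option 'I_m), (insub y : option 'I_n) with
  | Some i, Some j => A i j
  | _, _ => 0
  end.

(* Matrix Kronecker product P_d (x) ... (x) P_1 of the family
   Ps i : 'M_(Ms i) (i < d), with the convention
   (B (x) C)_{[i1 i2],[j1 j2]} = B_{i2 j2} C_{i1 j1}; unfolded, its
   entry at ([y_1..y_d],[x_1..x_d]) is prod_i (Ps i)_{y_i x_i}.
   N is the size (= prod_i Ms i in all uses). *)
Definition kronl {R : nzRingType} (N d : nat) (Ms : nat -> nat)
  (Ps : forall i : 'I_d, 'M[R]_(Ms i)) : 'M[R]_N :=
  \matrix_(y < N, x < N) \prod_(i < d) ment (Ps i) (digit Ms i y) (digit Ms i x).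

Arguments kronl {R} N {d} Ms Ps.

Definition outerv {R : nzRingType} (N d : nat) (Ms : nat -> nat)
  (a : forall i : 'I_d, 'cV[R]_(Ms i)) : 'cV[R]_N :=
  \col_(y < N) \prod_(i < d) ment (a i) (digit Ms i y) 0.

Arguments outerv {R} N {d} Ms a.

Definition dotv {R : nzRingType} {N : nat} (u v : 'cV[R]_N) : R :=
  \sum_(l < N) u l 0 * v l 0.

(* Mode sizes of the factor groups: nn i r = n^{(i)}_r (i < d, r < k),
   and M_i = prod_r n^{(i)}_r. *)
Definition grpdim (k : nat) (nn : nat -> nat -> nat) (i : nat) : nat :=
  (\prod_(r < k) nn i r)%N.

(* Index map of the permuted tensor: the entry of vec(tilde A) at
   y = [[i^(1)_1..i^(1)_k] .. [i^(d)_1..i^(d)_k]] is the entry of vec(A)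
   at tidx y = [[i^(1)_1..i^(d)_1] .. [i^(1)_k..i^(d)_k]]. *)
Definition tidx (n k d : nat) (nn : nat -> nat -> nat) (y : nat) : nat :=
  (\sum_(r < k)
     (\sum_(i < d) digit (nn i) r (digit (grpdim k nn) i y)
                     * radix (fun i => nn i r) i) * n ^ r)%N.

Definition Qmx {R : nzRingType} (n k d : nat) (nn : nat -> nat -> nat) : 'M[R]_(n ^ k) :=
  \matrix_(y < n ^ k, x < n ^ k) ((x : nat) == tidx n k d nn y)%:R.

Definition gen_symmetry {R : nzRingType} (n k : nat) (P : 'M[R]_(n ^ k)) : Prop :=
  forall (d : nat) (nn : nat -> nat -> nat),
    (forall r, (r < k)%N -> (\prod_(i < d) nn i r)%N = n) ->
    exists Ps : forall i : 'I_d, 'M[R]_(grpdim k nn i),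
      (forall i, is_perm_mx (Ps i)) /\
      P = (Qmx n k d nn)^T *m kronl (n ^ k) (grpdim k nn) Ps *m Qmx n k d nn.

From mathcomp Require Import all_boot all_order all_algebra all_fingroup.
From mathcomp Require Import ring lra.
Set Implicit Arguments. Unset Strict Implicit. Unset Printing Implicit Defensive.
Import Order.TTheory GRing.Theory Num.Theory.

(* Since Q is a permutation matrix, Q Q^T = 1, and the symmetry P vec(A) = vec(A) says that
   K = P_d (x) ... (x) P_1 fixes vec(tilde A) = sum_l sigma_l x_l, where x_l is the outer product
   of the a^(i)_l.  K maps x_l to the outer product of the P_i a^(i)_l, and inner products of
   outer products factor, so pairing with x_j and using the orthogonality of the terms and
   Condition 1 gives sigma_j = sigma_j * prod_i gamma_i with gamma_i = <a^(i)_j, P_i a^(i)_j>.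
   Each gamma_i is the inner product of a unit vector with a permutation of itself: it lies in
   [-1, 1] and equals +-1 only if P_i a^(i)_j = +-a^(i)_j.  A product of such numbers equal to 1
   has all factors +-1, an even number of them -1. *)

Section MixedRadix.
Variable dims : nat -> nat.

Definition grouped (d : nat) (t : nat -> nat) : nat :=
  \sum_(i < d) t i * radix dims i.

Lemma radix0 : radix dims 0 = 1.
Proof. by rewrite /radix big_ord0. Qed.

Lemma radixS r : radix dims r.+1 = radix dims r * dims r.
Proof. by rewrite /radix big_ord_recr. Qed.

Lemma dvdn_radix i d : i <= d -> radix dims i %| radix dims d.
Proof.
elim: d => [|d IHd]; first by rewrite leqn0 => /eqP->.
rewrite leq_eqVlt ltnS => /predU1P[-> //|/IHd i_d].
by rewrite radixS dvdn_mulr.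
Qed.

Lemma radix_gt0_dims d i : 0 < radix dims d -> i < d -> 0 < dims i.
Proof.
move=> radix_gt0 lt_id; have := dvdn_radix lt_id; rewrite radixS.
by case: posnP => // ->; rewrite muln0 dvd0n => /eqP radix0; rewrite radix0 in radix_gt0.
Qed.

Lemma digit_low i d r q : i < d -> digit dims i (r + q * radix dims d) = digit dims i r.
Proof.
move=> lt_id; have /dvdnP[c ->] := dvdn_radix lt_id; rewrite radixS /digit.
have [->|radix_gt0] := posnP (radix dims i); first by rewrite !divn0.
rewrite mulnA mulnC mulnA -mulnA addnC -mulnA [radix dims i * _]mulnC divnMDl //.
by rewrite mulnC modnMDl.
Qed.

Lemma digit_high d r q : r < radix dims d -> q < dims d ->
  digit dims d (r + q * radix dims d) = q.
Proof.
move=> lt_r lt_q; rewrite /digit addnC divnMDl; last exact: leq_ltn_trans lt_r.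
by rewrite divn_small // addn0 modn_small.
Qed.

Lemma digit_lt r x : 0 < dims r -> digit dims r x < dims r.
Proof. exact: ltn_pmod. Qed.

Lemma grouped_lt d t : (forall i, i < d -> t i < dims i) -> grouped d t < radix dims d.
Proof.
elim: d => [|d IHd] t_lt; first by rewrite /grouped big_ord0 radix0.
rewrite /grouped big_ord_recr /= radixS.
have lt_low : grouped d t < radix dims d by apply: IHd => i /ltnW; apply: t_lt.
apply: (@leq_trans (radix dims d * (t d).+1)); last by rewrite leq_mul2l t_lt ?orbT.
by rewrite mulnS mulnC ltn_add2r.
Qed.

Lemma digit_grouped d t : (forall i, i < d -> t i < dims i) ->
  forall i, i < d -> digit dims i (grouped d t) = t i.
Proof.
elim: d => [//|d IHd] t_lt i; rewrite ltnS leq_eqVlt /grouped big_ord_recr /=.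
have t_lt' j : j < d -> t j < dims j by move/ltnW; apply: t_lt.
case/predU1P=> [->|lt_id]; first by rewrite digit_high ?grouped_lt ?t_lt.
by rewrite digit_low // IHd.
Qed.

Lemma grouped_digit d y : y < radix dims d -> grouped d (digit dims ^~ y) = y.
Proof.
elim: d y => [|d IHd] y; first by rewrite radix0 ltnS leqn0 => /eqP->; rewrite /grouped big_ord0.
rewrite radixS => lt_y; rewrite /grouped big_ord_recr /=.
have radix_gt0 : 0 < radix dims d by case: posnP lt_y => // ->.
have low_digits i : i < d -> digit dims i y = digit dims i (y %% radix dims d).
  by move=> lt_id; rewrite {1}(divn_eq y (radix dims d)) addnC digit_low.
have low_sum : \sum_(i < d) digit dims i y * radix dims i = y %% radix dims d.
  by rewrite -[RHS]IHd ?ltn_pmod //; apply: eq_bigr => i _; rewrite low_digits.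
rewrite low_sum /digit (@modn_small (y %/ _)) ?ltn_divLR //; last by rewrite mulnC.
by rewrite addnC -divn_eq.
Qed.

Lemma eq_digits d y y' : y < radix dims d -> y' < radix dims d ->
  (forall i, i < d -> digit dims i y = digit dims i y') -> y = y'.
Proof.
move=> lt_y lt_y' eq_dig; rewrite -(grouped_digit lt_y) -(grouped_digit lt_y').
by apply: eq_bigr => i _; rewrite eq_dig.
Qed.

End MixedRadix.

Lemma radix_const c r : radix (fun _ => c) r = c ^ r.
Proof. by rewrite /radix prod_nat_const card_ord. Qed.

Lemma eq_digit dims dims' : dims =1 dims' -> digit dims =2 digit dims'.
Proof. by move=> eq_dims r x; rewrite /digit /radix eq_dims; congr (_ %/ _ %% _); apply: eq_bigr. Qed.

Lemma radix_expn (m : nat -> nat) k d :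
  radix (fun i => m i ^ k) d = (\prod_(i < d) m i) ^ k.
Proof. exact: prodrXl. Qed.

Section PermutedIndex.
Variables (n k d : nat) (m : nat -> nat).
Hypothesis prod_m : \prod_(i < d) m i = n.

Let mk i := m i ^ k.
(* The r-th grouped index [i^(1)_r ... i^(d)_r] of tidx y. *)
Let mode r y := grouped m d (fun i => digit (fun _ => m i) r (digit mk i y)).

Lemma tidx_grouped y : tidx n k d (fun i _ => m i) y = grouped (fun _ => n) k (mode ^~ y).
Proof.
apply: eq_bigr => r _; rewrite radix_const; congr (_ * _).
apply: eq_bigr => i _; congr (_ * _); congr digit.
by apply: eq_digit => i'; rewrite /grpdim prod_nat_const card_ord.
Qed.

Lemma m_gt0 y r i : y < n ^ k -> r < k -> i < d -> 0 < m i.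
Proof.
move=> lt_y lt_rk; apply: radix_gt0_dims; rewrite [radix _ _]prod_m.
by move: (leq_ltn_trans (leq0n y) lt_y); rewrite expn_gt0 => /orP[//|/eqP k0]; rewrite k0 in lt_rk.
Qed.

Lemma mode_lt y : y < n ^ k -> forall r, r < k -> mode r y < n.
Proof.
move=> lt_y r lt_rk; rewrite -[X in _ < X]prod_m; apply: grouped_lt => i lt_id.
exact/digit_lt/(m_gt0 lt_y lt_rk lt_id).
Qed.

Lemma tidx_lt y : y < n ^ k -> tidx n k d (fun i _ => m i) y < n ^ k.
Proof.
by move=> lt_y; rewrite tidx_grouped -radix_const; apply/grouped_lt/mode_lt.
Qed.

Lemma tidx_inj y y' : y < n ^ k -> y' < n ^ k ->
  tidx n k d (fun i _ => m i) y = tidx n k d (fun i _ => m i) y' -> y = y'.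
Proof.
move=> lt_y lt_y'; rewrite !tidx_grouped => eq_tidx.
have eq_mode r : r < k -> mode r y = mode r y'.
  move=> lt_rk; rewrite -(digit_grouped (mode_lt lt_y) lt_rk) eq_tidx.
  by rewrite digit_grouped //; apply: mode_lt.
have radix_mk : radix mk d = n ^ k by rewrite radix_expn prod_m.
have mk_gt0 i : i < d -> 0 < mk i.
  by move=> lt_id; apply: (radix_gt0_dims (d := d)); rewrite // radix_mk (leq_ltn_trans _ lt_y).
apply: (@eq_digits mk d); rewrite ?radix_mk // => i lt_id.
have digit_mk_lt x : digit mk i x < radix (fun _ => m i) k.
  by rewrite radix_const digit_lt ?mk_gt0.
apply: (eq_digits (digit_mk_lt y) (digit_mk_lt y')) => r lt_rk.
have digit_m_lt x i' : i' < d -> digit (fun _ => m i') r x < m i'.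
  by move=> lt_i'd; apply/digit_lt/(m_gt0 lt_y lt_rk lt_i'd).
move/(congr1 (digit m i)): (eq_mode r lt_rk).
by rewrite /mode !digit_grouped // => i'; apply: digit_m_lt.
Qed.

End PermutedIndex.

Local Open Scope ring_scope.

Lemma Qmx_mulmx_tr (R : nzRingType) n k d (m : nat -> nat) :
  (\prod_(i < d) m i)%N = n ->
  Qmx n k d (fun i _ => m i) *m (Qmx n k d (fun i _ => m i))^T = 1%:M :> 'M[R]_(n ^ k).
Proof.
move=> prod_m; apply/matrixP => y y'.
rewrite !mxE (bigD1 (Ordinal (tidx_lt prod_m (ltn_ord y)))) //=.
rewrite big1 => [|x]; last by rewrite -val_eqE !mxE => /negbTE ->; rewrite mul0r.
rewrite !mxE eqxx mul1r addr0.
have eq_tidx : (tidx n k d (fun i _ => m i) y == tidx n k d (fun i _ => m i) y') = (y == y').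
  by apply/eqP/eqP => [/(tidx_inj prod_m (ltn_ord y) (ltn_ord y')) eq_y|-> //]; apply: val_inj.
exact: (congr1 (fun b : bool => b%:R) eq_tidx).
Qed.

Lemma sum_ord_muln (R : nmodType) (F : nat -> R) a b :
  \sum_(x < a * b) F x = \sum_(q < b) \sum_(r < a) F (r + q * a)%N.
Proof.
elim: b => [|b IHb]; first by rewrite muln0 !big_ord0.
rewrite big_ord_recr /= -IHb mulnS addnC big_split_ord /=.
by congr (_ + _); apply: eq_bigr => r _; rewrite addnC mulnC.
Qed.

Lemma sum_prod_digit (R : comPzSemiRingType) (F : nat -> nat -> R) dims d :
  \sum_(x < radix dims d) \prod_(i < d) F i (digit dims i x) =
  \prod_(i < d) \sum_(t < dims i) F i t.
Proof.
elim: d => [|d IHd]; first by rewrite radix0 big_ord1 !big_ord0.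
rewrite radixS (sum_ord_muln (fun x => \prod_(i < d.+1) F i (digit dims i x))).
rewrite big_ord_recr /= -IHd mulr_suml exchange_big /=.
apply: eq_bigr => r _; rewrite mulr_sumr; apply: eq_bigr => q _.
rewrite big_ord_recr /= digit_high //; congr (_ * _).
by apply: eq_bigr => i _; rewrite digit_low.
Qed.

Lemma mentE (R : nzRingType) p q (A : 'M[R]_(p, q)) (i : 'I_p) (j : 'I_q) :
  ment A i j = A i j.
Proof. by rewrite /ment !valK. Qed.

Lemma ment_col (R : nzRingType) p (u : 'cV[R]_p) (i : 'I_p) (j : 'I_1) :
  ment u i 0 = u i j.
Proof. by rewrite (ord1 j) -(mentE u i ord0). Qed.

Lemma ment_mulmx (R : nzRingType) p q (A : 'M[R]_(p, q)) (u : 'cV[R]_q) y :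
  (y < p)%N -> ment (A *m u) y 0 = \sum_(t < q) ment A y t * ment u t 0.
Proof.
move=> lt_y; rewrite -[y]/(nat_of_ord (Ordinal lt_y)) (ment_col _ _ ord0) mxE.
by apply: eq_bigr => t _; rewrite mentE (ment_col _ _ ord0).
Qed.

Section DotProduct.
Variables (R : comNzRingType) (N : nat).
Implicit Types (u v w : 'cV[R]_N).

Lemma dotvC u v : dotv u v = dotv v u.
Proof. by apply: eq_bigr => l _; rewrite mulrC. Qed.

Lemma dotvZr c u v : dotv u (c *: v) = c * dotv u v.
Proof. by rewrite /dotv mulr_sumr; apply: eq_bigr => l _; rewrite mxE mulrCA. Qed.

Lemma dotvZl c u v : dotv (c *: u) v = c * dotv u v.
Proof. by rewrite dotvC dotvZr dotvC. Qed.

Lemma dotv_sumr u I (r : seq I) (P : pred I) (F : I -> 'cV[R]_N) :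
  dotv u (\sum_(j <- r | P j) F j) = \sum_(j <- r | P j) dotv u (F j).
Proof.
rewrite /dotv exchange_big /=; apply: eq_bigr => l _.
by rewrite summxE mulr_sumr.
Qed.

Lemma dotv_addZ v w c :
  dotv (v + c *: w) (v + c *: w) = dotv v v + 2 * c * dotv w v + c ^+ 2 * dotv w w.
Proof.
rewrite /dotv !mulr_sumr -!big_split /=; apply: eq_bigr => l _.
by rewrite !mxE; ring.
Qed.

Lemma dotv_perm_mx (P : 'M[R]_N) u : is_perm_mx P -> dotv (P *m u) (P *m u) = dotv u u.
Proof.
case/existsP => s /eqP ->; rewrite -row_permE /dotv.
by rewrite [RHS](reindex_inj (@perm_inj _ s)); apply: eq_bigr => l _; rewrite !mxE.
Qed.

End DotProduct.

Lemma dotv_ge0 (R : realDomainType) N (u : 'cV[R]_N) : 0 <= dotv u u.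
Proof. by apply: sumr_ge0 => l _; apply: sqr_ge0. Qed.

Lemma dotv_eq0 (R : realDomainType) N (u : 'cV[R]_N) : dotv u u = 0 -> u = 0.
Proof.
move=> /psumr_eq0P u0; apply/matrixP => l j; rewrite !mxE ord1.
have /eqP := u0 (fun l' _ => sqr_ge0 (u l' 0)) l isT.
by rewrite mulf_eq0 orbb => /eqP.
Qed.

Section OuterProduct.
Variables (R : comNzRingType) (N d : nat) (Ms : nat -> nat).
Hypothesis N_radix : N = radix Ms d.

Lemma dotv_outerv (a b : forall i : 'I_d, 'cV[R]_(Ms i)) :
  dotv (outerv N Ms a) (outerv N Ms b) = \prod_(i < d) dotv (a i) (b i).
Proof.
subst N; rewrite /dotv.
under eq_bigr => l _ do rewrite !mxE -big_split /=.
pose F i t := if insub i is Some i' then ment (a i') t 0 * ment (b i') t 0 else 0.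
transitivity (\sum_(l < radix Ms d) \prod_(i < d) F i (digit Ms i l)).
  by apply: eq_bigr => l _; apply: eq_bigr => i _; rewrite /F valK.
rewrite sum_prod_digit; apply: eq_bigr => i _; rewrite /F valK.
by apply: eq_bigr => t _; rewrite !(ment_col _ _ 0).
Qed.

Lemma kronl_mul_outerv (Ps : forall i : 'I_d, 'M[R]_(Ms i))
    (a : forall i : 'I_d, 'cV[R]_(Ms i)) :
  kronl N Ms Ps *m outerv N Ms a = outerv N Ms (fun i => Ps i *m a i).
Proof.
subst N; apply/matrixP => y j; rewrite !mxE.
under eq_bigr => x _ do rewrite !mxE -big_split /=.
pose F i t := if insub i is Some i' then ment (Ps i') (digit Ms i y) t * ment (a i') t 0 else 0.
transitivity (\sum_(l < radix Ms d) \prod_(i < d) F i (digit Ms i l)).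
  by apply: eq_bigr => l _; apply: eq_bigr => i _; rewrite /F valK.
rewrite sum_prod_digit; apply: eq_bigr => i _; rewrite /F valK ment_mulmx //.
by apply/digit_lt/(radix_gt0_dims _ (ltn_ord i))/(leq_ltn_trans _ (ltn_ord y)).
Qed.

End OuterProduct.

Section UnitVectorPermutation.
Variables (R : realDomainType) (M : nat) (P : 'M[R]_M) (b : 'cV[R]_M).
Hypotheses (P_perm : is_perm_mx P) (b_unit : dotv b b = 1).

Lemma dotv_perm_addZ c :
  dotv (P *m b + c *: b) (P *m b + c *: b) = 1 + 2 * c * dotv b (P *m b) + c ^+ 2.
Proof. by rewrite dotv_addZ dotv_perm_mx // b_unit mulr1. Qed.

Lemma normr_dotv_perm_le1 : `|dotv b (P *m b)| <= 1.
Proof.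
have := dotv_ge0 (P *m b + 1 *: b); have := dotv_ge0 (P *m b + (-1) *: b).
rewrite !dotv_perm_addZ ler_norml => ? ?; apply/andP; split; nra.
Qed.

Lemma dotv_perm_eq1 : dotv b (P *m b) = 1 -> P *m b = b.
Proof.
move=> gamma1; apply/eqP; rewrite -subr_eq0 -scaleN1r; apply/eqP/dotv_eq0.
by rewrite dotv_perm_addZ gamma1; ring.
Qed.

Lemma dotv_perm_eqN1 : dotv b (P *m b) = -1 -> P *m b = - b.
Proof.
move=> gammaN1; apply/eqP; rewrite -addr_eq0 -[b in _ + b]scale1r; apply/eqP/dotv_eq0.
by rewrite dotv_perm_addZ gammaN1; ring.
Qed.

End UnitVectorPermutation.

Lemma prod_normr_le1_sign (R : realDomainType) (I : finType) (F : I -> R) :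
  (forall i, `|F i| <= 1) -> \prod_i F i = 1 -> forall i, F i = 1 \/ F i = -1.
Proof.
move=> F_le1 F_prod i.
have rest_le1 : `|\prod_(l | l != i) F l| <= 1.
  by rewrite normr_prod; apply: prodr_ile1 => l _; rewrite normr_ge0 F_le1.
have F_ge1 : 1 <= `|F i|.
  have := congr1 Num.norm F_prod; rewrite (bigD1 i) //= normrM normr1 => <-.
  exact: ler_piMr.
have /eqP : `|F i| = 1 by apply/le_anti; rewrite F_le1 F_ge1.
by rewrite eqr_norml ler01 andbT => /orP[] /eqP; [left|right].
Qed.

Lemma prod_sign_eq1_even (R : realDomainType) (I : finType) (F : I -> R) :
  (forall i, F i = 1 \/ F i = -1) -> \prod_i F i = 1 -> ~~ odd #|[set i | F i == -1]|.
Proof.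
move=> F_sign; rewrite (bigID (fun i => F i == -1)) /=.
rewrite (eq_bigr (fun=> -1)) => [|i /eqP //]; rewrite prodr_const.
rewrite big1 => [|i]; last by case: (F_sign i) => -> //; rewrite eqxx.
rewrite mulr1 -signr_odd cardsE; case: odd => //= sign1.
by move: sign1; rewrite expr1; lra.
Qed.

Lemma dotv_fixed_orthogonal_sum (R : idomainType) N Rk (K : 'M[R]_N)
    (sigma : 'I_Rk -> R) (x : 'I_Rk -> 'cV[R]_N) j :
  K *m (\sum_l sigma l *: x l) = \sum_l sigma l *: x l ->
  sigma j != 0 -> dotv (x j) (x j) = 1 ->
  (forall l, l != j -> dotv (sigma l *: x l) (sigma j *: x j) = 0) ->
  (forall l, l != j -> sigma l * dotv (x j) (K *m x l) = 0) ->
  dotv (x j) (K *m x j) = 1.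
Proof.
move=> K_fix sigma_j_neq0 x_j_unit x_orth K_orth.
have dotv_sum : dotv (x j) (\sum_l sigma l *: x l) = sigma j.
  rewrite dotv_sumr (bigD1 j) //= big1 ?addr0 => [|l l_neq]; first by rewrite dotvZr x_j_unit mulr1.
  move/eqP: (x_orth l l_neq); rewrite dotvZl dotvZr mulrCA mulf_eq0 (negbTE sigma_j_neq0).
  by rewrite dotvZr dotvC => /eqP.
have dotv_K_sum : dotv (x j) (K *m \sum_l sigma l *: x l) = sigma j * dotv (x j) (K *m x j).
  rewrite mulmx_sumr dotv_sumr (bigD1 j) //= big1 ?addr0 => [|l l_neq]; rewrite -scalemxAr dotvZr //.
  exact: K_orth.
by apply: (mulfI sigma_j_neq0); rewrite -dotv_K_sum K_fix dotv_sum mulr1.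
Qed.

Theorem theorem2 (R : realFieldType) (n k d Rk : nat) (m : nat -> nat)
  (P : 'M[R]_(n ^ k)) (vecA : 'cV[R]_(n ^ k))
  (Ps : forall i : 'I_d, 'M[R]_(m i ^ k))
  (sigma : 'I_Rk -> R) (a : forall i : 'I_d, 'I_Rk -> 'cV[R]_(m i ^ k)) :
  is_perm_mx P ->
  gen_symmetry P ->
  P *m vecA = vecA ->
  (\prod_(i < d) m i)%N = n ->
  (forall i, is_perm_mx (Ps i)) ->
  P = (Qmx n k d (fun i _ => m i))^T *m kronl (n ^ k) (fun i => m i ^ k)%N Ps
        *m Qmx n k d (fun i _ => m i) ->
  Qmx n k d (fun i _ => m i) *m vecA =
    \sum_(j < Rk) sigma j *: outerv (n ^ k) (fun i => m i ^ k)%N (fun i => a i j) ->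
  (forall i j, dotv (a i j) (a i j) = 1) ->
  (forall j, sigma j != 0) ->
  (forall j l, j != l ->
     dotv (sigma j *: outerv (n ^ k) (fun i => m i ^ k)%N (fun i => a i j))
          (sigma l *: outerv (n ^ k) (fun i => m i ^ k)%N (fun i => a i l)) = 0) ->
  injective sigma ->
  (forall l j, j != l ->
     sigma j * \prod_(i < d) dotv (a i l) (Ps i *m a i j) = 0) ->
  forall j : 'I_Rk,
    (forall i : 'I_d, Ps i *m a i j = a i j \/ Ps i *m a i j = - a i j) /\
    ~~ odd #|[set i : 'I_d | Ps i *m a i j == - a i j]|.
Proof.
move=> _ _ P_vecA prod_m Ps_perm P_def Q_vecA a_unit sigma_neq0 terms_orth _ cond1 j.
have N_radix : (n ^ k)%N = radix (fun i => m i ^ k)%N d by rewrite radix_expn prod_m.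
pose gamma i := dotv (a i j) (Ps i *m a i j).
have gamma_prod : \prod_i gamma i = 1.
  rewrite -(dotv_outerv N_radix (fun i => a i j) (fun i => Ps i *m a i j)).
  rewrite -kronl_mul_outerv //.
  apply: (dotv_fixed_orthogonal_sum (sigma := sigma)
    (x := fun l => outerv (n ^ k) (fun i => m i ^ k)%N (fun i => a i l))) => [||||l l_neq].
  - by rewrite -Q_vecA -{2}P_vecA P_def !mulmxA Qmx_mulmx_tr // mul1mx.
  - exact: sigma_neq0.
  - by rewrite dotv_outerv // big1.
  - by move=> l; apply: terms_orth.
  - by rewrite kronl_mul_outerv // dotv_outerv // cond1.
have gamma_sign := prod_normr_le1_sign
  (fun i => normr_dotv_perm_le1 (Ps_perm i) (a_unit i j)) gamma_prod.
split=> [i|].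
  have [Ps_i a_i] := (Ps_perm i, a_unit i j).
  by case: (gamma_sign i) => [/(dotv_perm_eq1 Ps_i a_i)|/(dotv_perm_eqN1 Ps_i a_i)]; [left|right].
suff -> : [set i | Ps i *m a i j == - a i j] = [set i | gamma i == -1].
  exact: prod_sign_eq1_even.
apply/setP => i; rewrite !inE; apply/eqP/eqP => [Pa_neg|].
  by rewrite /gamma Pa_neg -scaleN1r dotvZr a_unit mulr1.
exact: dotv_perm_eqN1 (Ps_perm i) (a_unit i j).
Qed.
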